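(* Let $k$ be a positive integer. Among all real numbers $1\ge a_1\ge\dots\ge a_k\ge0$ with $\sum_{i=1}^k a_i=1$, the value of \[\frac{1}{\prod_{i=1}^k(1-a_i)^{1-a_i}\,a_i^{2a_i}}\] (with the convention $0^0=1$) is maximized when $a_i=\frac1k$ for all $i$. *)

From Stdlib Require Import Reals Lra Lia.
Open Scope R_scope.

Definition rpow0 (b e : R) : R :=
  if Req_EM_T b 0 then (if Req_EM_T e 0 then 1 else 0) else Rpower b e.

Fixpoint prodR (k : nat) (f : nat -> R) : R :=
  match k with
  | O => 1
  | S n => prodR n f * f n
  end.

Fixpoint sumR (k : nat) (f : nat -> R) : R :=
  match k with
  | O => 0
  | S n => sumR n f + f n
  end.

Definition Phi (k : nat) (a : nat -> R) : R :=
  / prodR k (fun i => rpow0 (1 - a i) (1 - a i) * rpow0 (a i) (2 * a i)).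

(* Writing b^e = exp (e ln b), Phi k a = 1 / exp (sum_i f (a_i)) with
   f x = (1 - x) ln (1 - x) + 2 x ln x, so it suffices to show that
   sum_i f (a_i) is minimal at the uniform point.  Since x ln x lies above its
   tangents, f lies above its tangent at c = 1/k on [0, 1]; summing, the linear
   parts cancel because sum_i a_i = 1 = k c, leaving sum_i f (a_i) >= k f (c).
   The ordering of the a_i only serves to place them in [0, 1]. *)

From Stdlib Require Import Reals Lra Lia.
Open Scope R_scope.

Lemma xlnx_above_tangent (u v : R) :
  0 <= u -> 0 < v -> u * ln v + (u - v) <= u * ln u.
Proof.
  intros Hu Hv. destruct (Req_dec u 0) as [->|Hu0]; [lra|].
  pose proof (exp_ineq1_le (ln v - ln u)) as Hexp.
  assert (Hvu : exp (ln v - ln u) = v / u).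
  { unfold Rminus, Rdiv. rewrite exp_plus, exp_Ropp, !exp_ln; lra. }
  rewrite Hvu in Hexp.
  apply (Rmult_le_compat_l u) in Hexp; [|lra].
  replace (u * (v / u)) with v in Hexp by (field; lra).
  nra.
Qed.

Definition Phi_exponent (x : R) : R := (1 - x) * ln (1 - x) + 2 * x * ln x.

Lemma Phi_exponent_above_tangent (c x : R) :
  0 < c < 1 -> 0 <= x <= 1 ->
  Phi_exponent c + (2 * ln c - ln (1 - c) + 1) * (x - c) <= Phi_exponent x.
Proof.
  intros Hc Hx. unfold Phi_exponent.
  pose proof (xlnx_above_tangent (1 - x) (1 - c) ltac:(lra) ltac:(lra)).
  pose proof (xlnx_above_tangent x c ltac:(lra) ltac:(lra)).
  nra.
Qed.

Lemma rpow0_scaled_self (r b : R) : rpow0 b (r * b) = exp (r * b * ln b).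
Proof.
  unfold rpow0. destruct (Req_EM_T b 0) as [->|]; [|reflexivity].
  destruct (Req_EM_T (r * 0) 0); [|lra].
  rewrite Rmult_0_r, Rmult_0_l, exp_0. reflexivity.
Qed.

Lemma prodR_ext (k : nat) (f g : nat -> R) :
  (forall i, f i = g i) -> prodR k f = prodR k g.
Proof. intros Hfg; induction k; simpl; congruence. Qed.

Lemma prodR_exp (k : nat) (g : nat -> R) :
  prodR k (fun i => exp (g i)) = exp (sumR k g).
Proof.
  induction k; simpl.
  - now rewrite exp_0.
  - now rewrite IHk, exp_plus.
Qed.

Lemma sumR_ext (k : nat) (f g : nat -> R) :
  (forall i, f i = g i) -> sumR k f = sumR k g.
Proof. intros Hfg; induction k; simpl; congruence. Qed.

Lemma sumR_le (k : nat) (f g : nat -> R) :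
  (forall i, (i < k)%nat -> f i <= g i) -> sumR k f <= sumR k g.
Proof.
  intros Hfg; induction k; simpl; [lra|].
  assert (sumR k f <= sumR k g) by (apply IHk; intros; apply Hfg; lia).
  specialize (Hfg k ltac:(lia)). lra.
Qed.

Lemma sumR_affine (k : nat) (A B : R) (f : nat -> R) :
  sumR k (fun i => A + B * f i) = INR k * A + B * sumR k f.
Proof. induction k; simpl sumR; [simpl; ring|]. rewrite IHk, S_INR. ring. Qed.

Lemma sumR_const (k : nat) (A : R) : sumR k (fun _ => A) = INR k * A.
Proof. induction k; simpl sumR; [simpl; ring|]. rewrite IHk, S_INR. ring. Qed.

Lemma Phi_exp (k : nat) (a : nat -> R) :
  Phi k a = / exp (sumR k (fun i => Phi_exponent (a i))).
Proof.
  unfold Phi. f_equal. rewrite <- prodR_exp. apply prodR_ext. intros i.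
  rewrite <- (Rmult_1_l (1 - a i)) at 2.
  rewrite !rpow0_scaled_self, <- exp_plus.
  unfold Phi_exponent. f_equal. ring.
Qed.

Lemma nonincreasing_le (k : nat) (a : nat -> R) :
  (forall i, (S i < k)%nat -> a i >= a (S i)) ->
  forall i j, (i <= j < k)%nat -> a j <= a i.
Proof.
  intros Hmono i j Hij.
  induction j as [|j IHj]; [replace i with 0%nat by lia; lra|].
  destruct (Nat.eq_dec i (S j)) as [->|Hne]; [lra|].
  specialize (Hmono j ltac:(lia)). specialize (IHj ltac:(lia)). lra.
Qed.

Lemma sumR_Phi_exponent_uniform_le (k : nat) (a : nat -> R) :
  (1 <= k)%nat -> (forall i, (i < k)%nat -> 0 <= a i <= 1) -> sumR k a = 1 ->
  sumR k (fun _ => Phi_exponent (/ INR k)) <= sumR k (fun i => Phi_exponent (a i)).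
Proof.
  intros Hk Hbound Hsum.
  destruct (Nat.eq_dec k 1) as [->|Hk1].
  { simpl in Hsum |- *. replace (a 0%nat) with (/ 1) by (rewrite Rinv_1; lra). lra. }
  assert (HkR : 2 <= INR k) by (replace 2 with (INR 2) by (simpl; lra); apply le_INR; lia).
  set (c := / INR k).
  assert (Hc : 0 < c < 1).
  { unfold c; split; [apply Rinv_0_lt_compat; lra|].
    rewrite <- Rinv_1. apply Rinv_lt_contravar; lra. }
  assert (Hkc : INR k * c = 1) by (unfold c; field; lra).
  set (D := 2 * ln c - ln (1 - c) + 1).
  assert (Htangents : sumR k (fun i => (Phi_exponent c - D * c) + D * a i)
                      = sumR k (fun _ => Phi_exponent c)).
  { rewrite sumR_affine, sumR_const, Hsum.
    replace (INR k * (Phi_exponent c - D * c) + D * 1)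
      with (INR k * Phi_exponent c - D * (INR k * c) + D) by ring.
    rewrite Hkc. ring. }
  rewrite <- Htangents. apply sumR_le. intros i Hi.
  pose proof (Phi_exponent_above_tangent c (a i) Hc (Hbound i Hi)). unfold D. lra.
Qed.

Theorem lemma3p12 (k : nat) (hk : (1 <= k)%nat) (a : nat -> R) :
  (1 >= a 0%nat) ->
  (forall i, (S i < k)%nat -> a i >= a (S i)) ->
  (a (Nat.pred k) >= 0) ->
  sumR k a = 1 ->
  Phi k a <= Phi k (fun _ => / INR k).
Proof.
  intros Hfirst Hmono Hlast Hsum.
  assert (Hbound : forall i, (i < k)%nat -> 0 <= a i <= 1).
  { intros i Hi. split.
    - pose proof (nonincreasing_le k a Hmono i (Nat.pred k) ltac:(lia)). lra.
    - pose proof (nonincreasing_le k a Hmono 0 i ltac:(lia)). lra. }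
  rewrite !Phi_exp. apply Rinv_le_contravar; [apply exp_pos|].
  destruct (sumR_Phi_exponent_uniform_le k a hk Hbound Hsum) as [Hlt|Heq].
  - left. now apply exp_increasing.
  - right. now rewrite Heq.
Qed.
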